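(* Fix a directed edge set $\mathcal{E}\subseteq\{(k,i)\in[n]^2: k\neq i\}$ and a randomized design (a probability distribution for ${\bf z}\in\{0,1\}^n$) with $0<\mathbb{E}[z_i]<1$ for all $i\in[n]$. Suppose the individually weighted linear estimator $\hat{\mathrm{est}}({\bf w},{\bf v})=\sum_{i\in[n]}\big(w_iz_i+v_i(1-z_i)\big)Y_i({\bf z})$ is unbiased for $\mathrm{TTE}$ under the heterogeneous additive network effects model with edge set $\mathcal{E}$, i.e. $\mathbb{E}[\hat{\mathrm{est}}({\bf w},{\bf v})]=\mathrm{TTE}$ for every choice of real parameters $\{\alpha_i\}_{i\in[n]}$, $\{\beta_i\}_{i\in[n]}$, $\{\gamma_{ki}\}_{(k,i)\in\mathcal{E}}$. Then necessarily $w_i=\frac{1}{n\mathbb{E}[z_i]}$ and $v_i=-\frac{1}{n\mathbb{E}[1-z_i]}$ for all $i$, i.e. \[\hat{\mathrm{est}}({\bf w},{\bf v})=\frac1n\sum_{i\in[n]}\Big(\frac{z_i}{\mathbb{E}[z_i]}-\frac{1-z_i}{\mathbb{E}[1-z_i]}\Big)Y_i({\bf z}),\] and the design must satisfy $\mathbb{P}(z_k=z_i)=1$ for all $(k,i)\in\mathcal{E}$.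
   Context: Population $[n]=\{1,\dots,n\}$; treatment vector ${\bf z}=(z_1,\dots,z_n)\in\{0,1\}^n$ is random, drawn from a distribution called the randomized design. Heterogeneous additive network effects model: for real parameters $\alpha_i$ (baseline), $\beta_i$ (direct effect) and $\gamma_{ki}$ (effect of $k$'s treatment on $i$), the potential outcomes are $Y_i({\bf z})=\alpha_i+\beta_iz_i+\sum_{k\in[n]}\gamma_{ki}z_k$, where $\gamma_{ki}=0$ unless $(k,i)\in\mathcal{E}$, and $\mathcal{E}$ is a set of ordered pairs $(k,i)$ with $k\neq i$ (the network). The parameters are deterministic; all expectations are over ${\bf z}$. Total treatment effect: $\mathrm{TTE}=\frac1n\sum_{i}(Y_i({\bf 1})-Y_i({\bf 0}))=\frac1n\big(\sum_i\beta_i+\sum_{(k,i)\in\mathcal{E}}\gamma_{ki}\big)$. An individually weighted linear estimator is $\hat{\mathrm{est}}({\bf w},{\bf v})=\sum_{i}(w_iz_i+v_i(1-z_i))Y_i({\bf z})$ with deterministic real weights ${\bf w},{\bf v}$ not depending on ${\bf z}$. *)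

From mathcomp Require Import all_boot all_order all_algebra.
Set Implicit Arguments. Unset Strict Implicit. Unset Printing Implicit Defensive.
Import Order.TTheory GRing.Theory Num.Theory.
Local Open Scope ring_scope.

Section Defs.
Variables (R : realFieldType) (n : nat).

Definition assignment := {ffun 'I_n -> bool}.

Definition is_design (P : {ffun assignment -> R}) : Prop :=
  (forall z, 0 <= P z) /\ \sum_z P z = 1.

Definition Ex (P : {ffun assignment -> R}) (f : assignment -> R) : R :=
  \sum_z P z * f z.

Definition Pr (P : {ffun assignment -> R}) (A : pred assignment) : R :=
  \sum_(z | A z) P z.

Definition Yout (alpha beta : 'I_n -> R) (gamma : 'I_n -> 'I_n -> R)
  (z : assignment) (i : 'I_n) : R :=
  alpha i + beta i * (z i)%:R + \sum_k gamma k i * (z k)%:R.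

Definition TTE (E : {set 'I_n * 'I_n}) (beta : 'I_n -> R)
  (gamma : 'I_n -> 'I_n -> R) : R :=
  (\sum_i beta i + \sum_(p in E) gamma p.1 p.2) / n%:R.

Definition est (w v : 'I_n -> R) (alpha beta : 'I_n -> R)
  (gamma : 'I_n -> 'I_n -> R) (z : assignment) : R :=
  \sum_i (w i * (z i)%:R + v i * (1 - (z i)%:R)) * Yout alpha beta gamma z i.

End Defs.

From mathcomp Require Import all_boot all_order all_algebra.
From mathcomp Require Import ring.
Set Implicit Arguments. Unset Strict Implicit. Unset Printing Implicit Defensive.
Import Order.TTheory GRing.Theory Num.Theory.
Local Open Scope ring_scope.

(* Unbiasedness is tested on three one-parameter outcome models: a baseline
   [alpha = 1_i] gives [w_i E z_i + v_i E (1 - z_i) = 0], a direct effect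
   [beta = 1_i] gives [w_i E z_i = 1/n], and a single spillover
   [gamma = 1_(k,i)] gives [w_i E (z_i z_k) + v_i E ((1 - z_i) z_k) = 1/n].
   The first two pin down the weights; substituting them into the third
   leaves [w_i P(z_i > z_k) - v_i P(z_i < z_k) = 0], a vanishing combination
   of two probabilities with positive coefficients [w_i] and [- v_i]. *)

Section Expectation.
Variables (R : realFieldType) (n : nat) (P : {ffun assignment n -> R}).

Lemma eq_Ex (f g : assignment n -> R) : f =1 g -> Ex P f = Ex P g.
Proof. by move=> fg; apply: eq_bigr => z _; rewrite fg. Qed.

Lemma ExD (f g : assignment n -> R) :
  Ex P (fun z => f z + g z) = Ex P f + Ex P g.
Proof. by rewrite /Ex -big_split; apply: eq_bigr => z _; rewrite mulrDr. Qed.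

Lemma ExZ (a : R) (f : assignment n -> R) :
  Ex P (fun z => a * f z) = a * Ex P f.
Proof. by rewrite /Ex mulr_sumr; apply: eq_bigr => z _; rewrite mulrCA. Qed.

Lemma Ex_ge0 (f : assignment n -> R) :
  (forall z, 0 <= P z) -> (forall z, 0 <= f z) -> 0 <= Ex P f.
Proof. by move=> P_ge0 f_ge0; apply: sumr_ge0 => z _; apply: mulr_ge0. Qed.

Lemma PrE (A : pred (assignment n)) : Pr P A = Ex P (fun z => (A z)%:R).
Proof.
rewrite /Pr /Ex big_mkcond; apply: eq_bigr => z _.
by case: (A z); rewrite ?mulr1 ?mulr0.
Qed.

Lemma Ex1B (f : assignment n -> R) :
  is_design P -> Ex P (fun z => 1 - f z) = 1 - Ex P f.
Proof.
case=> _ P_sum1; rewrite /Ex -[in RHS]P_sum1 -sumrB.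
by apply: eq_bigr => z _; rewrite mulrBr mulr1.
Qed.

Lemma Pr_agree (k i : 'I_n) : is_design P ->
  Pr P (fun z => z k == z i) =
  1 - (Ex P (fun z => (z i)%:R * (1 - (z k)%:R))
       + Ex P (fun z => (1 - (z i)%:R) * (z k)%:R)).
Proof.
move=> design; rewrite PrE -ExD -Ex1B //; apply: eq_Ex => z.
by case: (z i); case: (z k);
  rewrite /= ?subrr ?subr0 ?mulr0 ?mul0r ?mulr1 ?addr0 ?add0r ?subr0 ?subrr.
Qed.

End Expectation.

Lemma ltr0n_ord (R : numDomainType) (n : nat) (i : 'I_n) : 0 < n%:R :> R.
Proof. by rewrite ltr0n (leq_ltn_trans _ (ltn_ord i)). Qed.

Lemma est_single_unit (R : realFieldType) (n : nat) (w v alpha beta : 'I_n -> R)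
    (gamma : 'I_n -> 'I_n -> R) (i : 'I_n) (g : assignment n -> R) :
  (forall z j, Yout alpha beta gamma z j = (j == i)%:R * g z) ->
  est w v alpha beta gamma =1
    (fun z => (w i * (z i)%:R + v i * (1 - (z i)%:R)) * g z).
Proof.
move=> Y_i z; rewrite /est (bigD1 i) //= big1 ?addr0 => [|j ji].
  by rewrite Y_i eqxx mul1r.
by rewrite Y_i (negbTE ji) mul0r mulr0.
Qed.

Section Unbiased.
Variables (R : realFieldType) (n : nat) (E : {set 'I_n * 'I_n}).
Variables (P : {ffun assignment n -> R}) (w v : 'I_n -> R).
Hypothesis unbiased : forall (alpha beta : 'I_n -> R) (gamma : 'I_n -> 'I_n -> R),
  (forall k i, (k, i) \notin E -> gamma k i = 0) ->
  Ex P (est w v alpha beta gamma) = TTE E beta gamma.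

Lemma unbiased_baseline (i : 'I_n) :
  w i * Ex P (fun z => (z i)%:R) + v i * Ex P (fun z => 1 - (z i)%:R) = 0.
Proof.
have := @unbiased (fun j => (j == i)%:R) (fun _ => 0) (fun _ _ => 0)
  (fun _ _ _ => erefl).
rewrite (eq_Ex P (est_single_unit w v (i := i) (g := fun _ => 1) _)); last first.
  by move=> z j; rewrite /Yout big1 => [|k _]; rewrite ?mul0r ?addr0 ?mulr1.
rewrite /TTE !big1 ?addr0 ?mul0r // => <-.
by rewrite -!ExZ -ExD; apply: eq_Ex => z; ring.
Qed.

Lemma unbiased_direct (i : 'I_n) :
  w i * Ex P (fun z => (z i)%:R) = n%:R^-1.
Proof.
have := @unbiased (fun _ => 0) (fun j => (j == i)%:R) (fun _ _ => 0)
  (fun _ _ _ => erefl).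
rewrite (eq_Ex P (est_single_unit w v (i := i) (g := fun z => (z i)%:R) _)); last first.
  move=> z j; rewrite /Yout big1 ?addr0 ?add0r => [|k _]; last by rewrite mul0r.
  by case: eqP => [->|]; rewrite ?mul0r.
rewrite /TTE big1_eq addr0 (bigD1 i) //= eqxx big1 ?addr0 => [|j ji];
  last by rewrite (negbTE ji).
rewrite mul1r => <-; rewrite -ExZ; apply: eq_Ex => z.
by case: (z i) => /=; ring.
Qed.

Lemma unbiased_spillover (k i : 'I_n) : (k, i) \in E ->
  w i * Ex P (fun z => (z i)%:R * (z k)%:R)
  + v i * Ex P (fun z => (1 - (z i)%:R) * (z k)%:R) = n%:R^-1.
Proof.
move=> ki_E.
have gamma_E : forall k' j, (k', j) \notin E ->
    ((k' == k) && (j == i))%:R = 0 :> R.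
  by move=> k' j; case: andP => [[/eqP -> /eqP ->]|]; rewrite ?ki_E.
have := @unbiased (fun _ => 0) (fun _ => 0) _ gamma_E.
rewrite (eq_Ex P (est_single_unit w v (i := i) (g := fun z => (z k)%:R) _)); last first.
  move=> z j; rewrite /Yout mul0r !add0r; case: (j == i).
    rewrite (bigD1 k) //= !eqxx mul1r big1 ?addr0 // => k' /negbTE ->.
    by rewrite mul0r.
  by rewrite mul0r big1 // => k' _; rewrite andbF mul0r.
rewrite /TTE big1_eq add0r (bigD1 (k, i)) //= !eqxx big1 ?addr0; last first.
  by case=> a b /andP[_ ab_ki]; rewrite -xpair_eqE (negbTE ab_ki).
rewrite mul1r => <-; rewrite -!ExZ -ExD; apply: eq_Ex => z; ring.
Qed.

Lemma unbiased_control (i : 'I_n) :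
  v i * Ex P (fun z => 1 - (z i)%:R) = - n%:R^-1.
Proof.
by rewrite -(unbiased_direct i); apply/eqP; rewrite -addr_eq0 addrC unbiased_baseline.
Qed.

Lemma unbiased_treated_weight (i : 'I_n) : Ex P (fun z => (z i)%:R) != 0 ->
  w i = 1 / (n%:R * Ex P (fun z => (z i)%:R)).
Proof.
move=> p_neq0; have n_neq0 := lt0r_neq0 (ltr0n_ord R i).
by apply: (mulIf p_neq0); rewrite unbiased_direct; field; rewrite p_neq0.
Qed.

Lemma unbiased_control_weight (i : 'I_n) : Ex P (fun z => 1 - (z i)%:R) != 0 ->
  v i = - (1 / (n%:R * Ex P (fun z => 1 - (z i)%:R))).
Proof.
move=> q_neq0; have n_neq0 := lt0r_neq0 (ltr0n_ord R i).
by apply: (mulIf q_neq0); rewrite unbiased_control; field; rewrite q_neq0.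
Qed.

Hypothesis P_ge0 : forall z, 0 <= P z.

Lemma unbiased_no_discordance (k i : 'I_n) : (k, i) \in E ->
  0 < Ex P (fun z => (z i)%:R) -> 0 < Ex P (fun z => 1 - (z i)%:R) ->
  Ex P (fun z => (z i)%:R * (1 - (z k)%:R)) = 0 /\
  Ex P (fun z => (1 - (z i)%:R) * (z k)%:R) = 0.
Proof.
move=> ki_E p_gt0 q_gt0.
set X := Ex P _; set Y := Ex P _.
have ind_ge0 (a b : bool) : 0 <= (a%:R * (1 - b%:R) : R).
  by case: a; case: b; rewrite /= ?subrr ?subr0 ?mulr0 ?mul1r ?mul0r.
have X_ge0 : 0 <= X by apply: Ex_ge0 => // z; apply: ind_ge0.
have Y_ge0 : 0 <= Y by apply: Ex_ge0 => // z; rewrite mulrC; apply: ind_ge0.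
have w_gt0 : 0 < w i.
  by rewrite -(pmulr_lgt0 _ p_gt0) unbiased_direct invr_gt0 ltr0n_ord.
have v_lt0 : v i < 0.
  by rewrite -(pmulr_llt0 _ q_gt0) unbiased_control oppr_lt0 invr_gt0 ltr0n_ord.
have XY_comb : w i * X + (- v i) * Y = 0.
  have a_eq : Ex P (fun z => (z i)%:R * (z k)%:R) = Ex P (fun z => (z i)%:R) - X.
    by apply/eqP; rewrite eq_sym subr_eq -ExD; apply/eqP/eq_Ex => z; ring.
  have := unbiased_spillover ki_E; rewrite a_eq -/Y => spillover.
  by rewrite -(subrr n%:R^-1) -{1}(unbiased_direct i) -spillover; ring.
move/eqP: XY_comb; rewrite paddr_eq0 ?mulr_ge0 ?oppr_ge0 ?(ltW w_gt0) ?(ltW v_lt0) //.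
by rewrite !mulf_eq0 oppr_eq0 (gt_eqF w_gt0) (lt_eqF v_lt0) => /andP[/eqP -> /eqP ->].
Qed.

End Unbiased.

Theorem theorem1 (R : realFieldType) (n : nat) (E : {set 'I_n * 'I_n})
  (P : {ffun assignment n -> R}) (w v : 'I_n -> R) :
  (forall p, p \in E -> p.1 != p.2) ->
  is_design P ->
  (forall i : 'I_n, 0 < Ex P (fun z => (z i)%:R) < 1) ->
  (forall (alpha beta : 'I_n -> R) (gamma : 'I_n -> 'I_n -> R),
      (forall k i, (k, i) \notin E -> gamma k i = 0) ->
      Ex P (est w v alpha beta gamma) = TTE E beta gamma) ->
  (forall i : 'I_n,
      w i = 1 / (n%:R * Ex P (fun z => (z i)%:R)) /\
      v i = - (1 / (n%:R * Ex P (fun z => 1 - (z i)%:R)))) /\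
  (forall k i : 'I_n, (k, i) \in E -> Pr P (fun z => z k == z i) = 1).
Proof.
(* The edge set need not be loop-free for this direction. *)
move=> _ design p_bounds unbiased; have [P_ge0 _] := design.
have p_gt0 i : 0 < Ex P (fun z => (z i)%:R) by case/andP: (p_bounds i).
have q_gt0 i : 0 < Ex P (fun z => 1 - (z i)%:R).
  by rewrite Ex1B // subr_gt0; case/andP: (p_bounds i).
split=> [i | k i ki_E].
  split; [exact (unbiased_treated_weight unbiased (lt0r_neq0 (p_gt0 i)))
        | exact (unbiased_control_weight unbiased (lt0r_neq0 (q_gt0 i)))].
rewrite Pr_agree //.
have [-> ->] := unbiased_no_discordance unbiased P_ge0 ki_E (p_gt0 i) (q_gt0 i).
by rewrite addr0 subr0.
Qed.
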